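(* Let $k\geq1$, $n\geq2k$, let $\mathcal{S},\mathcal{T}$ be antichains in $\mathcal{F}_{2k}^{[1,n]}$ with $\mathcal{T}\prec_p\mathcal{S}$, let $j\geq1$, and for $i\geq1$ let $$D_i:=\Big(B\big(\mathcal{S}([i,i+1]),i+2\big)\setminus B\big(\mathcal{T}([i,i+1]),i+2\big)\Big)*\overline{[i,i+1]}.$$ If $D_{j+1}$ is not the void complex, then $$D_j\cap D_{j+1}=\Big(B\big(\mathcal{S}([j+1,j+2]),j+2\big)\setminus B\big(\mathcal{T}([j,j+1]),j+2\big)\Big)*\overline{\{j+1\}}.$$
   Context: Notation: $[m,n]=\{m,\dots,n\}$; $d$-subsets of $[n]$ are identified with increasing vectors; $G\leq_p F$ means componentwise $\leq$ and $G\prec_p F$ means $G\leq_p F-\mathbf{1}_d$ ($\mathbf{1}_d$ the all-ones vector). For $r\geq1$, $\mathcal{F}_{2r}^{[m,n]}$ is the set of sets $\{i_1,i_1+1,\dots,i_r,i_r+1\}$ with $m\leq i_1$, $i_r\leq n-1$, $i_j\leq i_{j+1}-2$, ordered by $\leq_p$; $\mathcal{F}_0^{[m,n]}=\{\emptyset\}$. For antichains, $\mathcal{T}\prec_p\mathcal{S}$ means every $G\in\mathcal{T}$ satisfies $G\prec_p F$ for some $F\in\mathcal{S}$. $\mathcal{F}_{2r}(\mathcal{S})$ is the order ideal generated by $\mathcal{S}$. For $1\leq\ell\leq k$ and $J=[j,j+2\ell-1]$, $\mathcal{S}(J)\subseteq\mathcal{F}_{2(k-\ell)}^{[1,n]}$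 is the set of maximal elements of $\{H\in\mathcal{F}_{2(k-\ell)}^{[1,n]}: H\subseteq[j+2\ell,n],\ J\cup H\in\mathcal{F}(\mathcal{S})\}$. $B(\mathcal{S}(J),m)$ is the pure simplicial complex whose facets are the sets of $\mathcal{F}_{2(k-\ell)}(\mathcal{S}(J))\cap\mathcal{F}_{2(k-\ell)}^{[m,n]}$. For pure complexes $X,Y$, $X\setminus Y$ is the complex generated by the facets of $X$ that are not facets of $Y$. $\overline{V}$ is the full simplex on $V$, $*$ is the join (join with the void complex is void). *)

From mathcomp Require Import all_boot.
From mathcomp Require Import finmap.
Set Implicit Arguments. Unset Strict Implicit. Unset Printing Implicit Defensive.
Local Open Scope fset_scope.

Definition setfam := {fset nat} -> Prop.

(* the set {i_1,i_1+1,...,i_r,i_r+1} built from the starting points s *)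
Definition domset (s : seq nat) : {fset nat} :=
  [fset x | x in flatten [seq [:: i; i.+1] | i <- s]].

(* G \in F_{2r}^{[m,n]} ; for r = 0 this is exactly {emptyset} *)
Definition Fam (r m n : nat) : setfam := fun G =>
  exists s : seq nat,
    [/\ size s = r,
        path (fun a b => a.+2 <= b) (head 0 s) (behead s),
        (forall i, i \in s -> m <= i /\ i.+1 <= n) &
        G = domset s].

(* sets identified with increasing vectors *)
Definition incvec (G : {fset nat}) : seq nat := sort leq (enum_fset G).

Definition lep (G F : {fset nat}) : bool := all2 leq (incvec G) (incvec F).

(* G <_p F : G <=_p F - 1_d, i.e. componentwise a <= b - 1 *)
Definition precp (G F : {fset nat}) : bool :=
  all2 (fun a b => a.+1 <= b) (incvec G) (incvec F).

Definition antichain (k n : nat) (S : setfam) : Prop :=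
  (forall F, S F -> Fam k 1 n F) /\
  (forall F G, S F -> S G -> lep F G -> F = G).

Definition precp_fam (T S : setfam) : Prop :=
  forall G, T G -> exists F, S F /\ precp G F.

Definition ideal (r n : nat) (S : setfam) : setfam := fun G =>
  Fam r 1 n G /\ exists F, S F /\ lep G F.

Definition intv (a b : nat) : {fset nat} := [fset x | x in iota a (b.+1 - a)].

(* S(J) for J = [j, j+2l-1]  (S an antichain in F_{2k}^{[1,n]}) *)
Definition SJ (k n : nat) (S : setfam) (l j : nat) : setfam :=
  let J := intv j (j + 2 * l - 1) in
  let P := fun H => [/\ Fam (k - l) 1 n H,
                        H `<=` intv (j + 2 * l) n &
                        ideal k n S (J `|` H)] in
  fun H => P H /\ forall H', P H' -> lep H H' -> H' = H.

(* simplicial complexes = families of faces *)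
Definition gen (Fs : setfam) : setfam := fun s => exists F, Fs F /\ s `<=` F.
Definition facets (X : setfam) : setfam := fun F =>
  X F /\ forall G, X G -> F `<=` G -> G = F.
Definition cdiff (X Y : setfam) : setfam :=
  gen (fun F => facets X F /\ ~ facets Y F).
Definition simplex (V : {fset nat}) : setfam := fun s => s `<=` V.
Definition join (X Y : setfam) : setfam := fun s =>
  exists a b, [/\ X a, Y b & s = a `|` b].
Definition cap (X Y : setfam) : setfam := fun s => X s /\ Y s.
Definition voidc (X : setfam) : Prop := forall s, ~ X s.
Definition ceq (X Y : setfam) : Prop := forall s, X s <-> Y s.

(* B(S', m) : pure complex with facets F_{2r}(S') \cap F_{2r}^{[m,n]}, r = k - l *)
Definition Bc (r n : nat) (S' : setfam) (m : nat) : setfam :=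
  gen (fun G => ideal r n S' G /\ Fam r m n G).

Definition Dc (k n : nat) (S T : setfam) (i : nat) : setfam :=
  join (cdiff (Bc (k - 1) n (SJ k n S 1 i) (i + 2))
              (Bc (k - 1) n (SJ k n T 1 i) (i + 2)))
       (simplex (intv i i.+1)).

(* Every element of F_{2r}^{[m,n]} is domset s for a unique start sequence s
   ("gapped": entries in [m,n) at mutual distance >= 2), and <=_p, <_p become
   componentwise comparisons of start sequences.  Through this dictionary the
   facets of B(X([i,i+1]), m) are the domset s with s gapped from m and s below
   some s' gapped from i+2 with i :: s' below X (Bfacet_char), and the faces of
   (B \ B') * simplex V are the subsets of F `|` V for facets F of B not in B'.

   Inclusion from right to left: a facet x of the right-hand side is itself a
   facet for D_j, and its raise to start at j+3 is a facet for D_{j+1}.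
   Inclusion from left to right: given facets x1 of D_j and x2 of D_{j+1}
   covering a face, walk upward from the meet of x1 and x2 towards x1 by block
   shifts that keep the face (minus j+1) covered (walk).  While j :: Y lies below
   T, the hypothesis T <_p S puts (j+1) :: (Y+1) below S, so every visited
   sequence stays below a facet of B(S([j+1,j+2])); as j :: x1 is not below T,
   the walk stops at a facet of the right-hand side. *)

From mathcomp Require Import all_boot.
From mathcomp Require Import finmap.
From mathcomp Require Import zify.
From Stdlib Require Import Classical.
Local Open Scope fset_scope.
Set Implicit Arguments. Unset Strict Implicit. Unset Printing Implicit Defensive.

Section StartSequences.
Local Open Scope nat_scope.

Definition expand (s : seq nat) : seq nat := flatten [seq [:: i; i.+1] | i <- s].

Definition spaced : rel nat := fun a b => a.+2 <= b.

(* [s] is the start sequence of an element of F_{2 size s}^{[m,n]}. *)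
Definition gapped (m n : nat) (s : seq nat) : bool :=
  sorted spaced s && all (fun i => m <= i < n) s.

Lemma expand_cons a s : expand (a :: s) = a :: a.+1 :: expand s.
Proof. by []. Qed.

Lemma size_expand s : size (expand s) = 2 * size s.
Proof. by elim: s => [|a s IH] //=; rewrite IH; lia. Qed.

Lemma mem_domsetP x s : reflect (exists2 i, i < size s &
   (nth 0 s i == x) || ((nth 0 s i).+1 == x)) (x \in domset s).
Proof.
rewrite inE; suff -> : (x \in expand s) = has (fun i => (i == x) || (i.+1 == x)) s.
  exact: has_nthP.
elim: s => [|a s IH] //; rewrite expand_cons !inE IH /=.
by rewrite [x == a]eq_sym [x == a.+1]eq_sym orbA.
Qed.

Lemma all2P (r : rel nat) s t : reflect (size s = size t /\
  forall i, i < size s -> r (nth 0 s i) (nth 0 t i)) (all2 r s t).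
Proof.
elim: s t => [|a s IH] [|b t] /=; [by constructor|by constructor; case|by constructor; case|].
apply: (iffP andP) => [[Hab /IH [Hs Hi]]|[Hs Hi]].
- by split=> [|[|i] //= /Hi]; rewrite ?Hs.
- split; first exact: (Hi 0).
  by apply/IH; split=> [|i Hi']; [case: Hs | exact: (Hi i.+1)].
Qed.

Lemma spaced_nth s i j : sorted spaced s -> i <= j -> j < size s ->
  nth 0 s i + 2 * (j - i) <= nth 0 s j.
Proof.
move=> /(sortedP 0) Hs /subnKC <-; rewrite addKn; elim: (j - i) => [|d IH] Hd.
  by rewrite addn0 muln0 addn0.
rewrite addnS in Hd; have := IH (ltnW Hd).
by have := Hs (i + d) Hd; rewrite addnS /spaced; lia.
Qed.

Lemma gappedP m n s : gapped m n s <->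
  (forall i, i.+1 < size s -> nth 0 s i + 2 <= nth 0 s i.+1) /\
  (forall i, i < size s -> m <= nth 0 s i < n).
Proof.
rewrite /gapped; split.
- move=> /andP [/(sortedP 0) Hs /(all_nthP 0) Hr]; split=> // i /Hs.
  by rewrite /spaced; lia.
- move=> [Hs Hr]; apply/andP; split; last exact/(all_nthP 0).
  by apply/(sortedP 0) => i /Hs; rewrite /spaced; lia.
Qed.

Lemma gapped_sorted m n s : gapped m n s -> sorted spaced s.
Proof. by case/andP. Qed.

Lemma gapped_mono m m' n s : m' <= m -> gapped m n s -> gapped m' n s.
Proof. by move=> Hm /gappedP [H1 H2]; apply/gappedP; split=> // i /H2; lia. Qed.

Lemma gapped_lo m n s i : gapped m n s -> i < size s -> m + 2 * i <= nth 0 s i.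
Proof.
move=> Hg Hi; have := spaced_nth (gapped_sorted Hg) (leq0n i) Hi.
by have [_ /(_ 0 (leq_ltn_trans (leq0n _) Hi))] := (gappedP _ _ _).1 Hg; lia.
Qed.

Lemma domset_range m n s x : gapped m n s -> x \in domset s -> m <= x <= n.
Proof.
move=> /gappedP [_ Hr] /mem_domsetP [l /Hr]; lia.
Qed.

Lemma expand_sorted s : sorted spaced s -> sorted ltn (expand s).
Proof.
elim: s => [|a s IH] // Hs; rewrite expand_cons /= ltnSn /=.
case: s IH Hs => [|b s] IH //= /andP [Hab Hs].
by move: (IH Hs); rewrite expand_cons /= => ->; rewrite andbT.
Qed.

Lemma incvec_domset s : sorted spaced s -> incvec (domset s) = expand s.
Proof.
move=> /expand_sorted Hf; apply: (sorted_eq leq_trans anti_leq).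
- exact/sort_sorted/leq_total.
- by apply: sub_sorted Hf => a b /ltnW.
- rewrite perm_sort; apply: uniq_perm; first exact: fset_uniq.
    exact: (sorted_uniq ltn_trans ltnn).
  by move=> x; rewrite inE.
Qed.

Lemma domset_inj s t : sorted spaced s -> sorted spaced t -> domset s = domset t -> s = t.
Proof.
move=> Hs Ht E; have : expand s = expand t by rewrite -!incvec_domset ?E.
by elim: s t {Hs Ht E} => [|a s IH] [|b t] //= [-> _ /IH ->].
Qed.

Lemma card_domset s : sorted spaced s -> #|` domset s| = 2 * size s.
Proof.
by move=> Hs; rewrite -size_expand -(incvec_domset Hs) /incvec size_sort.
Qed.

Lemma all2_expand (r : rel nat) s t : (forall a b, r a.+1 b.+1 = r a b) ->
  all2 r (expand s) (expand t) = all2 r s t.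
Proof.
move=> Hr; elim: s t => [|a s IH] [|b t] //=.
by rewrite IH Hr andbA andbb.
Qed.

Lemma lep_domset s t : sorted spaced s -> sorted spaced t ->
  lep (domset s) (domset t) = all2 leq s t.
Proof. by move=> Hs Ht; rewrite /lep !incvec_domset // all2_expand. Qed.

Lemma precp_domset s t : sorted spaced s -> sorted spaced t ->
  precp (domset s) (domset t) = all2 (fun a b => a.+1 <= b) s t.
Proof. by move=> Hs Ht; rewrite /precp !incvec_domset // all2_expand. Qed.

Lemma Fam_gapped r m n G : Fam r m n G <->
  exists s, [/\ size s = r, gapped m n s & G = domset s].
Proof.
split.
- move=> [s [Hs Hp Hm ->]]; exists s; split => //; apply/andP; split.
  + by case: s Hp {Hs Hm}.
  + by apply/allP => i /Hm; lia.
- move=> [s [Hs /andP [Hp /allP Hm] ->]]; exists s; split => //.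
  + by case: s Hp {Hs Hm}.
  + by move=> i /Hm; lia.
Qed.

End StartSequences.

Section ComponentwiseOrder.
Local Open Scope nat_scope.

Lemma all2_leq_refl s : all2 leq s s.
Proof. by elim: s => //= a s ->; rewrite leqnn. Qed.

Lemma all2_leq_trans s t u : all2 leq s t -> all2 leq t u -> all2 leq s u.
Proof.
elim: s t u => [|a s IH] [|b t] [|c u] //= /andP [H1 H2] /andP [H3 H4].
by rewrite (leq_trans H1 H3) (IH _ _ H2 H4).
Qed.

(* The sum of the entries strictly increases along the componentwise order:
   it is the termination measure of the upward walks below. *)
Lemma sumn_le s t : all2 leq s t -> sumn s <= sumn t.
Proof.
by elim: s t => [|a s IH] [|b t] //= /andP [H1 /IH H2]; apply: leq_add.
Qed.

Lemma sumn_lt s t : all2 leq s t -> s != t -> sumn s < sumn t.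
Proof.
elim: s t => [|a s IH] [|b t] //= /andP [H1 H2] Hne.
have := sumn_le H2; case: (ltnP a b) => Hab; first lia.
have Eab : a = b by lia.
subst b; have Hst : s != t by apply: contraNneq Hne => ->.
by have := IH _ H2 Hst; lia.
Qed.

Lemma sumn_bound l n : all (fun x => x <= n) l -> sumn l <= n * size l.
Proof. by elim: l => [|a l IH] //= /andP [Ha /IH]; rewrite mulnS; lia. Qed.

Definition meet_seq (s t : seq nat) : seq nat :=
  mkseq (fun i => minn (nth 0 s i) (nth 0 t i)) (size s).

Lemma size_meet s t : size (meet_seq s t) = size s.
Proof. exact: size_mkseq. Qed.

Lemma nth_meet s t i : i < size s -> nth 0 (meet_seq s t) i = minn (nth 0 s i) (nth 0 t i).
Proof. exact: nth_mkseq. Qed.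

Lemma meet_gapped m n s t : size s = size t -> gapped m n s -> gapped m n t ->
  gapped m n (meet_seq s t).
Proof.
move=> Hst /gappedP [S1 S2] /gappedP [T1 T2]; apply/gappedP; rewrite size_meet.
split=> i Hi; rewrite !nth_meet //; try lia.
- by have := S1 i Hi; rewrite Hst in Hi; have := T1 i Hi; lia.
- by have := S2 i Hi; rewrite Hst in Hi; have := T2 i Hi; lia.
Qed.

Lemma meet_le_l s t : all2 leq (meet_seq s t) s.
Proof.
by apply/all2P; rewrite size_meet; split=> // i Hi; rewrite nth_meet // geq_minl.
Qed.

Lemma meet_le_r s t : size s = size t -> all2 leq (meet_seq s t) t.
Proof.
move=> Hst; apply/all2P; rewrite size_meet; split=> // i Hi.
by rewrite nth_meet // geq_minr.
Qed.

Lemma meet_mem x s t : size s = size t -> sorted spaced s -> sorted spaced t ->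
  x \in domset s -> x \in domset t -> x \in domset (meet_seq s t).
Proof.
move=> Hst Hs Ht /mem_domsetP [p Hp Hpx] /mem_domsetP [q Hq Hqx].
apply/mem_domsetP; rewrite size_meet.
case: (ltngtP p q) => Hpq.
- rewrite -Hst in Hq; exists q; rewrite // nth_meet //.
  by have := spaced_nth Hs (ltnW Hpq) Hq; move: Hpx Hqx; lia.
- rewrite Hst in Hp; exists p; rewrite ?Hst // nth_meet ?Hst //.
  by have := spaced_nth Ht (ltnW Hpq) Hp; move: Hpx Hqx; lia.
- by subst q; exists p; rewrite // nth_meet //; move: Hpx Hqx; lia.
Qed.

Lemma gapped_between m n Y Z G : sorted spaced Z -> all2 leq Y Z -> all2 leq Z G ->
  gapped m n Y -> gapped m n G -> gapped m n Z.
Proof.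
move=> Hs /all2P [EY HY] /all2P [EG HG] /gappedP [_ Y2] /gappedP [_ G2].
apply/andP; split => //; apply/(all_nthP 0) => i Hi.
have HiY : i < size Y by rewrite EY.
have HiG : i < size G by rewrite -EG.
by have := HY i HiY; have := HG i Hi; have := Y2 i HiY; have := G2 i HiG; lia.
Qed.

Lemma meet_cover m n s t (tau : {fset nat}) : size s = size t ->
  gapped m n s -> gapped m.+1 n t -> tau `<=` domset s ->
  (forall x, x \in tau -> x != m -> x \in domset t) -> tau `<=` domset (meet_seq s t).
Proof.
move=> Hst Hgs Hgt Hs Ht; apply/fsubsetP => x Hx.
have Hxs := fsubsetP Hs x Hx.
case: (eqVneq x m) => [Exm|Hxm]; last first.
  apply: meet_mem (gapped_sorted Hgs) (gapped_sorted Hgt) Hxs (Ht x Hx Hxm).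
  exact: Hst.
subst x; move/mem_domsetP: Hxs => [p Hp Hpx]; have Hlo := gapped_lo Hgs Hp.
have Hp0 : p = 0 by move: Hpx; lia.
subst p; apply/mem_domsetP; exists 0; rewrite ?size_meet // nth_meet //.
by rewrite Hst in Hp; have := gapped_lo Hgt Hp; move: Hpx; lia.
Qed.

(* [raise m x]: the least start sequence above x whose l-th entry is at least
   m + 2l, i.e. that may be gapped from m. *)
Definition raise (m : nat) (x : seq nat) : seq nat :=
  mkseq (fun l => maxn (nth 0 x l) (m + 2 * l)) (size x).

Lemma size_raise m x : size (raise m x) = size x.
Proof. exact: size_mkseq. Qed.

Lemma raise_ge m x : all2 leq x (raise m x).
Proof.
by apply/all2P; rewrite size_raise; split=> // l Hl; rewrite nth_mkseq // leq_maxl.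
Qed.

Lemma raise_le m n x h : all2 leq x h -> gapped m n h -> all2 leq (raise m x) h.
Proof.
move=> /all2P [E Hle] Hg; apply/all2P; rewrite size_raise; split=> // l Hl.
rewrite nth_mkseq // geq_max Hle //=; rewrite E in Hl; exact: gapped_lo Hg Hl.
Qed.

Lemma raise_gapped m m' n x h : gapped m' n x -> all2 leq x h -> gapped m n h ->
  gapped m n (raise m x).
Proof.
move=> /gappedP [X1 _] Hxh Hh; have /all2P [E Hle] := raise_le Hxh Hh.
have /gappedP [_ H2] := Hh; apply/gappedP; rewrite size_raise; split=> i Hi.
- by rewrite !nth_mkseq; try lia; have := X1 i Hi; lia.
- have Hir : i < size (raise m x) by rewrite size_raise.
  have := Hle i Hir; rewrite nth_mkseq //.
  by rewrite E in Hir; have := H2 i Hir; lia.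
Qed.

Lemma raise_cover m n x y : gapped m n x -> y \in domset x ->
  y = m \/ y \in domset (raise m.+1 x).
Proof.
move=> Hg /mem_domsetP [p Hp Hpy]; have [G1 _] := (gappedP _ _ _).1 Hg.
have Hlo := gapped_lo Hg Hp.
case: (leqP (m.+1 + 2 * p) (nth 0 x p)) => Hc.
  right; apply/mem_domsetP; exists p; rewrite ?size_raise // nth_mkseq //.
  by rewrite (maxn_idPl Hc).
have Ep : nth 0 x p = m + 2 * p by lia.
case/orP: Hpy => /eqP Hy.
- case: p Hp Hlo Hc Ep Hy => [|p] Hp Hlo Hc Ep Hy; first by left; lia.
  right; apply/mem_domsetP; exists p; rewrite ?size_raise; first lia.
  by rewrite nth_mkseq; last lia; have := G1 p Hp; lia.
- right; apply/mem_domsetP; exists p; rewrite ?size_raise // nth_mkseq //; lia.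
Qed.

Lemma all2_shift s t u : all2 leq s t -> all2 (fun a b => a.+1 <= b) t u ->
  all2 leq (map succn s) u.
Proof.
elim: s t u => [|a s IH] [|b t] [|c u] //= /andP [H1 H2] /andP [H3 H4].
by rewrite (IH _ _ H2 H4) andbT; lia.
Qed.

End ComponentwiseOrder.

Section UpwardWalk.
Local Open Scope nat_scope.

(* [tight Y t i]: i lies in the block of start points of Y packed at distance
   exactly 2 that begins at index t. *)
Definition tight (Y : seq nat) (t i : nat) : bool :=
  (t <= i) && (nth 0 Y i == nth 0 Y t + 2 * (i - t)).

(* The elementary upward move: push the tight block beginning at t one step right. *)
Definition shift_block (Y : seq nat) (t : nat) : seq nat :=
  mkseq (fun i => nth 0 Y i + tight Y t i) (size Y).

Lemma size_shift_block Y t : size (shift_block Y t) = size Y.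
Proof. exact: size_mkseq. Qed.

Lemma nth_shift_block Y t i : i < size Y ->
  nth 0 (shift_block Y t) i = nth 0 Y i + tight Y t i.
Proof. exact: nth_mkseq. Qed.

Lemma tight_succ Y t i : sorted spaced Y -> t <= i -> i.+1 < size Y ->
  tight Y t i.+1 = tight Y t i && (nth 0 Y i.+1 == nth 0 Y i + 2).
Proof.
move=> Hs Hti Hi; rewrite /tight Hti (leq_trans Hti (leqnSn _)) /=.
have := spaced_nth Hs Hti (ltnW Hi); have := spaced_nth Hs (leqnSn i) Hi.
by do 3 case: eqP => ?; lia.
Qed.

Lemma shift_block_sorted Y t : sorted spaced Y -> sorted spaced (shift_block Y t).
Proof.
move=> Hs; apply/(sortedP 0) => i; rewrite size_shift_block => Hi.
rewrite !nth_shift_block ?(ltnW Hi) //.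
have := (sortedP 0 Hs) i Hi; rewrite /spaced.
case: (leqP t i) => Hti; first by rewrite tight_succ //; case: tight; case: eqP; lia.
have -> : tight Y t i = false by rewrite /tight leqNgt Hti.
by case: tight; lia.
Qed.

Lemma shift_block_ge Y t : all2 leq Y (shift_block Y t).
Proof.
apply/all2P; rewrite size_shift_block; split=> // i Hi.
by rewrite nth_shift_block // leq_addr.
Qed.

Lemma shift_block_le_succ Y t : all2 leq (shift_block Y t) (map succn Y).
Proof.
apply/all2P; rewrite size_shift_block size_map; split=> // i Hi.
by rewrite nth_shift_block // (nth_map 0) //; case: tight; lia.
Qed.

Lemma shift_block_neq Y t : t < size Y -> shift_block Y t != Y.
Proof.
move=> Ht; apply/eqP => /(congr1 (nth 0 ^~ t)); rewrite nth_shift_block //.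
by rewrite /tight leqnn subnn muln0 addn0 eqxx; lia.
Qed.

Lemma shift_block_cover Y t x : sorted spaced Y -> x \in domset Y ->
  x != nth 0 Y t -> x \in domset (shift_block Y t).
Proof.
move=> Hs /mem_domsetP [p Hp Hpx] Hxt; apply/mem_domsetP; rewrite size_shift_block.
case Hbp: (tight Y t p); last by exists p; rewrite // nth_shift_block // Hbp addn0.
case/orP: Hpx => /eqP Hpx; last by exists p; rewrite // nth_shift_block // Hbp; lia.
have [Htp _] := andP Hbp.
have Htp' : t < p.
  by rewrite ltn_neqAle Htp andbT; apply: contraNneq Hxt => ->; rewrite Hpx.
have Hp1 : t <= p.-1 by lia.
have Ep : p.-1.+1 = p by lia.
have Hb1 : tight Y t p.-1 by move: Hbp; rewrite -{1}Ep tight_succ ?Ep // => /andP [].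
exists p.-1; first lia.
by move: Hbp Hb1; rewrite -{1}Ep tight_succ ?Ep // => /andP [_ /eqP]; rewrite nth_shift_block; lia.
Qed.

Lemma shift_block_le Y G t : sorted spaced G -> all2 leq Y G -> t < size Y ->
  nth 0 Y t < nth 0 G t -> all2 leq (shift_block Y t) G.
Proof.
move=> HsG /all2P [Esz Hle] Ht Hyt; apply/all2P; rewrite size_shift_block.
split=> // i Hi; rewrite nth_shift_block //; have := Hle i Hi.
case Hb: (tight Y t i) => /=; last lia.
have [Hti /eqP Hyi] := andP Hb; rewrite Esz in Hi Ht.
by have := spaced_nth HsG Hti Hi; lia.
Qed.

Lemma first_gap_not_in Y G t : sorted spaced Y -> sorted spaced G ->
  all2 leq Y G -> t < size Y -> nth 0 Y t < nth 0 G t ->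
  (forall q, q < t -> nth 0 Y q = nth 0 G q) -> nth 0 Y t \notin domset G.
Proof.
move=> HsY HsG /all2P [Esz _] Ht Hyt Heq; apply/mem_domsetP => -[q Hq Hqx].
case: (ltnP q t) => Hqt.
- by have := Heq q Hqt; have := spaced_nth HsY (ltnW Hqt) Ht; move: Hqx; lia.
- by have := spaced_nth HsG Hqt Hq; move: Hqx; lia.
Qed.

(* The move is the block
   shift at the first index where Y and G differ. *)
Lemma walk_step m n Y G (tau : {fset nat}) :
  gapped m n Y -> gapped m n G -> all2 leq Y G -> Y != G ->
  tau `<=` domset Y -> tau `<=` domset G ->
  exists Z, [/\ gapped m n Z, all2 leq Y Z, Y != Z, all2 leq Z G &
                all2 leq Z (map succn Y) /\ tau `<=` domset Z].
Proof.
move=> HY HG HYG Hne HtY HtG; have [Esz Hle] := all2P _ _ _ HYG.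
have Hdiff : exists i, (i < size Y) && (nth 0 Y i < nth 0 G i).
  case: (boolP [exists i : 'I_(size Y), nth 0 Y i < nth 0 G i]) =>
    [/existsP [i Hi]|/existsPn Hall]; first by exists i; rewrite ltn_ord.
  case/eqP: Hne; apply: (eq_from_nth (x0 := 0)) => // i Hi.
  by apply/eqP; rewrite eqn_leq Hle // leqNgt (Hall (Ordinal Hi)).
case: (ex_minnP Hdiff) => t /andP [Ht Hyt] Hmin.
have Heq : forall q, q < t -> nth 0 Y q = nth 0 G q.
  move=> q Hqt; have Hq := ltn_trans Hqt Ht.
  apply/eqP; rewrite eqn_leq Hle // leqNgt; apply/negP => Hlt.
  by have := Hmin q; rewrite Hq Hlt => /(_ isT); lia.
have HZG := shift_block_le (gapped_sorted HG) HYG Ht Hyt.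
exists (shift_block Y t); split => //.
- exact: gapped_between (shift_block_sorted t (gapped_sorted HY)) (shift_block_ge Y t) HZG HY HG.
- exact: shift_block_ge.
- by rewrite eq_sym shift_block_neq.
split; first exact: shift_block_le_succ.
apply/fsubsetP => x Hx; apply: shift_block_cover (gapped_sorted HY) (fsubsetP HtY x Hx) _.
apply: contraNneq (first_gap_not_in (gapped_sorted HY) (gapped_sorted HG) HYG Ht Hyt Heq) => <-.
exact: fsubsetP HtG x Hx.
Qed.

Lemma walk (P Q : seq nat -> Prop) m n G (tau : {fset nat}) :
  gapped m n G -> ~ P G -> tau `<=` domset G ->
  (forall Y, gapped m n Y -> size Y = size G -> P Y -> Q (map succn Y)) ->
  forall Y, gapped m n Y -> all2 leq Y G -> tau `<=` domset Y ->
  (exists2 H, Q H & all2 leq Y H) ->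
  exists X, [/\ gapped m n X, size X = size G, tau `<=` domset X, ~ P X &
                exists2 H, Q H & all2 leq X H].
Proof.
move=> HG HnG HtG Hshift Y.
have [N] := ubnP (sumn G - sumn Y); elim: N Y => // N IH Y HN HY HYG HtY HQ.
have Esz := (all2P _ _ _ HYG).1.
case: (classic (P Y)) => HPY; last by exists Y.
case: (eqVneq Y G) => [EYG|Hne]; first by subst Y.
have [Z [HZ HYZ HneZ HZG [HZs HtZ]]] := walk_step HY HG HYG Hne HtY HtG.
apply: (IH Z) => //.
- by have := sumn_lt HYZ HneZ; have := sumn_le HZG; lia.
- by exists (map succn Y) => //; exact: Hshift.
Qed.

End UpwardWalk.

Section ComplexesAndIdeals.
Local Open Scope nat_scope.

Lemma in_intv x a b : (x \in intv a b) = (a <= x <= b).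
Proof. by rewrite inE mem_iota; case: (leqP a x) => //=; lia. Qed.

Lemma intv_cons i s : intv i i.+1 `|` domset s = domset (i :: s).
Proof.
apply/fsetP => x; rewrite in_fsetU in_intv !inE.
by case: (x \in expand s); rewrite ?orbT ?orbF //; lia.
Qed.

Lemma Fam_anti r m m' n A B : Fam r m n A -> Fam r m' n B -> A `<=` B -> A = B.
Proof.
move=> /Fam_gapped [s [Hs /gapped_sorted Hgs ->]] /Fam_gapped [t [Ht /gapped_sorted Hgt ->]] Hst.
by apply/eqP; rewrite eqEfcard Hst /= (card_domset Hgs) (card_domset Hgt) Hs Ht.
Qed.

Lemma facets_gen (Fs : setfam) F :
  (forall A B, Fs A -> Fs B -> A `<=` B -> A = B) -> (facets (gen Fs) F <-> Fs F).
Proof.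
move=> Hanti; split.
- move=> [[G [HG HFG]] Hmax].
  by rewrite -(Hmax G) //; exists G; split => //; exact: fsubset_refl.
- move=> HF; split; first by exists F; split => //; exact: fsubset_refl.
  move=> G [G' [HG' HGG']] HFG.
  have E := Hanti F G' HF HG' (fsubset_trans HFG HGG'); subst G'.
  by apply/eqP; rewrite eqEfsubset HGG' HFG.
Qed.

Lemma join_gen_simplex (P : setfam) V s :
  join (gen P) (simplex V) s <-> exists F, P F /\ s `<=` F `|` V.
Proof.
split.
- by move=> [a [b [[F [HF HaF]] HbV ->]]]; exists F; split => //; exact: fsetUSS.
- move=> [F [HF Hs]]; exists (s `&` F), (s `&` V); split.
  + by exists F; split => //; exact: fsubsetIr.
  + exact: fsubsetIr.
  + by rewrite -fsetIUr; apply/esym/fsetIidPl.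
Qed.

Lemma join_cdiff_simplexP r n X Y m m' V s :
  join (cdiff (Bc r n X m) (Bc r n Y m')) (simplex V) s <->
  exists F, [/\ ideal r n X F /\ Fam r m n F, ~ (ideal r n Y F /\ Fam r m' n F)
              & s `<=` F `|` V].
Proof.
have anti : forall Z m0 A B, (ideal r n Z A /\ Fam r m0 n A) ->
    (ideal r n Z B /\ Fam r m0 n B) -> A `<=` B -> A = B.
  by move=> Z m0 A B [_ HA] [_ HB]; exact: Fam_anti HA HB.
rewrite /cdiff /Bc join_gen_simplex; split.
- move=> [F [[/(facets_gen _ (anti X m)) HX HY] Hs]]; exists F; split => // HYF.
  by apply: HY; apply/(facets_gen _ (anti Y m')).
- move=> [F [HX HY Hs]]; exists F; split => //; split; first exact/(facets_gen _ (anti X m)).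
  by move=> /(facets_gen _ (anti Y m')).
Qed.

Lemma lep_refl A : lep A A.
Proof. exact: all2_leq_refl. Qed.

Lemma lep_trans A B C : lep A B -> lep B C -> lep A C.
Proof. exact: all2_leq_trans. Qed.

Lemma incvec_inj A B : incvec A = incvec B -> A = B.
Proof.
move=> E; apply/fsetP => x.
have : (x \in incvec A) = (x \in incvec B) by rewrite E.
by rewrite !mem_sort.
Qed.

(* In a family of sets with entries bounded by n, every member lies <=_p below a
   <=_p-maximal member (the vector sum strictly increases and is bounded). *)
Lemma exists_max (P : setfam) n G : P G ->
  (forall H, P H -> forall x, x \in H -> x <= n) ->
  exists H, [/\ P H, lep G H & forall H', P H' -> lep H H' -> H' = H].
Proof.
move=> HG Hb.
suff: forall N H, n * size (incvec G) - sumn (incvec H) < N -> P H -> lep G H ->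
    exists H0, [/\ P H0, lep G H0 & forall H', P H' -> lep H0 H' -> H' = H0].
  by move=> /(_ _ G (ltnSn _) HG (lep_refl G)).
elim=> // N IH H HN HH HGH.
case: (classic (exists H', [/\ P H', lep H H' & H' <> H])) => [[H' [HH' HHH' Hne]]|Hno].
- apply: (IH H') => //; last exact: lep_trans HGH HHH'.
  have Hne' : incvec H != incvec H' by apply/eqP => /incvec_inj E; apply: Hne.
  have Hsum := sumn_lt HHH' Hne'.
  have Hbd : sumn (incvec H') <= n * size (incvec H').
    by apply: sumn_bound; apply/allP => x; rewrite mem_sort; exact: Hb HH' x.
  by have [E _] := all2P _ _ _ (lep_trans HGH HHH'); rewrite -E in Hbd; lia.
- exists H; split => // H' HH' HHH'.
  by apply: NNPP => Hne; apply: Hno; exists H'.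
Qed.

Definition below (X : setfam) (k n : nat) (t : seq nat) : Prop :=
  exists u, [/\ X (domset u), gapped 1 n u, size u = k & all2 leq t u].

Lemma below_down X k n t t' : below X k n t -> all2 leq t' t -> below X k n t'.
Proof.
by move=> [u [H1 H2 H3 H4]] Hle; exists u; split => //; exact: all2_leq_trans Hle H4.
Qed.

Lemma sorted_cons m n i s : i.+2 <= m -> gapped m n s -> sorted spaced (i :: s).
Proof.
move=> Him /andP [Hs /allP Ha].
by case: s Hs Ha => [|b s] //= -> Ha; rewrite andbT /spaced; have := Ha b (mem_head _ _); lia.
Qed.

Lemma below_lt X k n t : below X k n t -> all (fun x => x < n) t.
Proof.
move=> [u [_ /gappedP [_ Hu] _ /all2P [E Hle]]]; apply/(all_nthP 0) => l Hl.
by have := Hle l Hl; rewrite E in Hl; have := Hu l Hl; lia.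
Qed.

Lemma gapped_succ m n Y : gapped m n Y -> all (fun x => x < n) (map succn Y) ->
  gapped m.+1 n (map succn Y).
Proof.
move=> /andP [Hs /allP Hm] /allP Hn; apply/andP; split; first by rewrite sorted_map.
by apply/allP => y Hy; have := Hn y Hy; case/mapP: Hy => x /Hm Hx ->; lia.
Qed.

Lemma gapped_cons m' m n i s : m' <= i < n -> i.+2 <= m -> gapped m n s ->
  gapped m' n (i :: s).
Proof.
move=> Hi Him Hs; rewrite /gapped (sorted_cons Him Hs) /= Hi /=.
by case/andP: Hs => _ /allP Ha; apply/allP => x /Ha; lia.
Qed.

Lemma ideal_cons (X : setfam) k n i s :
  (forall F, X F -> Fam k 1 n F) -> 1 <= i -> gapped (i + 2) n s ->
  (ideal k n X (domset (i :: s)) <-> below X k n (i :: s)).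
Proof.
move=> HX Hi Hs.
have Hsc : sorted spaced (i :: s) by apply: sorted_cons Hs; lia.
split.
- move=> [_ [F [XF Hlep]]]; have /Fam_gapped [u [Hu Hgu E]] := HX F XF; subst F.
  by exists u; split => //; rewrite -lep_domset // (gapped_sorted Hgu).
- move=> [u [XF Hgu Hu Hle]]; split; last first.
    by exists (domset u); split => //; rewrite lep_domset // (gapped_sorted Hgu).
  have [E Hle'] := all2P _ _ _ Hle.
  apply/Fam_gapped; exists (i :: s); split; rewrite ?E //.
  apply: gapped_cons Hs; last lia.
  have [_ /(_ 0)] := (gappedP _ _ _).1 Hgu; rewrite -E /= => /(_ isT).
  by have := Hle' 0 isT; rewrite /=; lia.
Qed.

End ComplexesAndIdeals.

Section SJFacets.
Local Open Scope nat_scope.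

Variables (X : setfam) (r n : nat).
Hypothesis HX : forall F, X F -> Fam r.+1 1 n F.

Definition SJ_cand (i : nat) (H : {fset nat}) : Prop :=
  [/\ Fam r 1 n H, H `<=` intv (i + 2) n & ideal r.+1 n X (intv i i.+1 `|` H)].

Lemma SJ_char i H : SJ r.+1 n X 1 i H <->
  SJ_cand i H /\ forall H', SJ_cand i H' -> lep H H' -> H' = H.
Proof. by rewrite /SJ /SJ_cand (_ : i + 2 * 1 - 1 = i.+1) ?subSS ?subn0 //; lia. Qed.

Lemma SJ_cand_char i H : 1 <= i ->
  SJ_cand i H <-> exists s, [/\ H = domset s, size s = r, gapped (i + 2) n s &
                               below X r.+1 n (i :: s)].
Proof.
move=> Hi; split.
- move=> [/Fam_gapped [s [Hs Hg ->]] Hsub Hid].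
  have Hg2 : gapped (i + 2) n s.
    apply/gappedP; have [G1 G2] := (gappedP _ _ _).1 Hg; split=> // l Hl.
    have : nth 0 s l \in intv (i + 2) n.
      by apply: (fsubsetP Hsub); apply/mem_domsetP; exists l; rewrite ?eqxx.
    by rewrite in_intv; have := G2 l Hl; lia.
  by exists s; split => //; apply/ideal_cons => //; rewrite -intv_cons.
- move=> [s [-> Hs Hg Hid]]; split.
  + by apply/Fam_gapped; exists s; split => //; apply: gapped_mono Hg; lia.
  + by apply/fsubsetP => x /(domset_range Hg); rewrite in_intv; lia.
  + by rewrite intv_cons; apply/ideal_cons.
Qed.

(* [Bfacet i m s]: domset s is a facet of B(X([i,i+1]), m). *)
Definition Bfacet (i m : nat) (s : seq nat) : Prop :=
  [/\ size s = r, gapped m n s &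
      exists s', [/\ size s' = r, gapped (i + 2) n s', below X r.+1 n (i :: s') &
                     all2 leq s s']].

Lemma Bfacet_char i m G : 1 <= i -> 1 <= m ->
  (ideal r n (SJ r.+1 n X 1 i) G /\ Fam r m n G) <-> exists2 s, G = domset s & Bfacet i m s.
Proof.
move=> Hi Hm; split.
- move=> [[_ [H [/SJ_char [HP _] Hlep]]] /Fam_gapped [s [Hs Hg E]]].
  have /(SJ_cand_char _ Hi) [s' [E' Hs' Hg' Hid]] := HP; subst G H.
  exists s => //; split => //; exists s'; split => //.
  by rewrite -lep_domset // ?(gapped_sorted Hg) ?(gapped_sorted Hg').
- move=> [s -> [Hs Hg [s' [Hs' Hg' Hid Hle]]]].
  split; last by apply/Fam_gapped; exists s.
  split; first by apply/Fam_gapped; exists s; split => //; exact: gapped_mono Hg.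
  have HP : SJ_cand i (domset s') by apply/(SJ_cand_char _ Hi); exists s'.
  have Hb : forall H, SJ_cand i H -> forall x, x \in H -> x <= n.
    by move=> H [_ Hsub _] x /(fsubsetP Hsub); rewrite in_intv => /andP [].
  have [H0 [HP0 Hl0 Hmax]] := exists_max HP Hb.
  exists H0; split; first exact/SJ_char.
  by apply: lep_trans Hl0; rewrite lep_domset // ?(gapped_sorted Hg) ?(gapped_sorted Hg').
Qed.

Lemma Bfacet_start i s : Bfacet i (i + 2) s <->
  [/\ size s = r, gapped (i + 2) n s & below X r.+1 n (i :: s)].
Proof.
split.
- move=> [Hs Hg [s' [_ _ Hid Hle]]]; split => //.
  by apply: (below_down Hid); rewrite /= leqnn.
- by move=> [Hs Hg Hid]; split => //; exists s; split => //; exact: all2_leq_refl.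
Qed.

End SJFacets.

Section Lemma310.
Local Open Scope nat_scope.

Variables (S T : setfam) (r n : nat).
Hypothesis HS : forall F, S F -> Fam r.+1 1 n F.
Hypothesis HT : forall F, T F -> Fam r.+1 1 n F.
Hypothesis Hprec : precp_fam T S.

(* [Dfacet i x]: domset x is a facet of B(S([i,i+1]), i+2) \ B(T([i,i+1]), i+2). *)
Definition Dfacet (i : nat) (x : seq nat) : Prop :=
  [/\ size x = r, gapped (i + 2) n x, below S r.+1 n (i :: x) & ~ below T r.+1 n (i :: x)].

Lemma Dc_char i s : 1 <= i ->
  Dc r.+1 n S T i s <-> exists x, Dfacet i x /\ s `<=` domset x `|` intv i i.+1.
Proof.
move=> Hi; have Hi2 : 1 <= i + 2 by lia.
rewrite /Dc subSS subn0 join_cdiff_simplexP; split.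
- move=> [F [/(Bfacet_char HS _ Hi Hi2) [x -> /Bfacet_start [Hx Hg HxS]] HnT Hs]].
  exists x; split => //; split => // HxT; apply: HnT.
  by apply/(Bfacet_char HT _ Hi Hi2); exists x => //; apply/Bfacet_start.
- move=> [x [[Hx Hg HxS HnT] Hs]]; exists (domset x); split => //.
  + by apply/(Bfacet_char HS _ Hi Hi2); exists x => //; apply/Bfacet_start.
  + move=> /(Bfacet_char HT _ Hi Hi2) [y E /Bfacet_start [_ Hgy HyT]].
    by rewrite (domset_inj (gapped_sorted Hg) (gapped_sorted Hgy) E) in HnT.
Qed.

Lemma below_shift i Y : below T r.+1 n (i :: Y) -> below S r.+1 n (i.+1 :: map succn Y).
Proof.
move=> [u [Tu Hgu Hu Hle]]; have [F [SF Hpr]] := Hprec Tu.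
have /Fam_gapped [v [Hv Hgv E]] := HS SF; subst F.
rewrite precp_domset ?(gapped_sorted Hgu) ?(gapped_sorted Hgv) // in Hpr.
by exists v; split => //; exact: (all2_shift Hle Hpr).
Qed.

Variable j : nat.

(* [Rfacet x]: domset x is a facet of B(S([j+1,j+2]), j+2) \ B(T([j,j+1]), j+2). *)
Definition Rfacet (x : seq nat) : Prop :=
  Bfacet S r n j.+1 (j + 2) x /\ ~ below T r.+1 n (j :: x).

Lemma rhs_char s : 1 <= j ->
  join (cdiff (Bc (r.+1 - 1) n (SJ r.+1 n S 1 j.+1) (j + 2))
              (Bc (r.+1 - 1) n (SJ r.+1 n T 1 j) (j + 2))) (simplex [fset j.+1]) s <->
  exists x, Rfacet x /\ s `<=` domset x `|` [fset j.+1].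
Proof.
move=> Hj; have Hj2 : 1 <= j + 2 by lia.
rewrite subSS subn0 join_cdiff_simplexP; split.
- move=> [F [/(Bfacet_char HS _ (ltn0Sn j) Hj2) [x -> HxS] HnT Hs]].
  exists x; split => //; split => // HxT; apply: HnT.
  have [Hx Hg _] := HxS.
  by apply/(Bfacet_char HT _ Hj Hj2); exists x => //; apply/Bfacet_start.
- move=> [x [[HxS HnT] Hs]]; exists (domset x); split => //.
  + by apply/(Bfacet_char HS _ (ltn0Sn j) Hj2); exists x.
  + move=> /(Bfacet_char HT _ Hj Hj2) [y E /Bfacet_start [_ Hgy HyT]].
    have [_ Hg _] := HxS.
    by rewrite (domset_inj (gapped_sorted Hg) (gapped_sorted Hgy) E) in HnT.
Qed.

Lemma Rfacet_Dj x : Rfacet x -> Dfacet j x.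
Proof.
move=> [[Hx Hg [s' [_ _ HS' Hle]]] HnT]; split => //.
by apply: (below_down HS'); rewrite /= leqnSn Hle.
Qed.

Lemma Rfacet_Dj1 x : Rfacet x -> Dfacet j.+1 (raise (j.+1 + 2) x).
Proof.
move=> [[Hx Hg [s' [Hs' Hg' HS' Hle]]] HnT].
split; first by rewrite size_raise.
- exact: raise_gapped Hg Hle Hg'.
- by apply: (below_down HS'); rewrite /= leqnn (raise_le Hle Hg').
- move=> HT'; apply: HnT; apply: (below_down HT').
  by rewrite /= leqnSn raise_ge.
Qed.

(* Raising x loses only the point j+2, which lies in [j+1,j+2]. *)
Lemma Rfacet_Dj1_cover x s : Rfacet x -> s `<=` domset x `|` [fset j.+1] ->
  s `<=` domset (raise (j.+1 + 2) x) `|` intv j.+1 j.+2.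
Proof.
move=> [[_ Hg _] _] Hs; apply/fsubsetP => y /(fsubsetP Hs).
rewrite !in_fsetU in_fset1 in_intv => /orP [Hy|/eqP ->]; last by rewrite leqnn leqnSn orbT.
case: (raise_cover Hg Hy) => [->|]; first by rewrite addn2 leqnSn leqnn orbT.
by rewrite addSn => ->.
Qed.

Lemma shift_witness Y : gapped (j + 2) n Y -> size Y = r -> below T r.+1 n (j :: Y) ->
  [/\ size (map succn Y) = r, gapped (j.+1 + 2) n (map succn Y) &
      below S r.+1 n (j.+1 :: map succn Y)].
Proof.
move=> HY HYr /below_shift HYS; rewrite size_map HYr; split => //.
by apply: gapped_succ HY _; have := below_lt HYS; rewrite /= => /andP [].
Qed.

(* The points of a face of D_j and D_{j+1} other than j+1 are covered by the meet
   of the two facets; walking from there towards the facet of D_j gives a facet of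
   the right-hand side covering them. *)
Lemma cap_Rfacet x1 x2 s : Dfacet j x1 -> Dfacet j.+1 x2 ->
  s `<=` domset x1 `|` intv j j.+1 -> s `<=` domset x2 `|` intv j.+1 j.+2 ->
  exists x, Rfacet x /\ s `<=` domset x `|` [fset j.+1].
Proof.
move=> [Hs1 Hg1 HS1 HT1] [Hs2 Hg2 HS2 HT2] Hsub1 Hsub2.
pose tau := s `\` [fset j.+1].
have Htau1 : tau `<=` domset x1.
  apply/fsubsetP => y; rewrite in_fsetD in_fset1 => /andP [Hy1 Hy].
  move/fsubsetP: Hsub1 => /(_ y Hy); rewrite in_fsetU in_intv => /orP [//|Hyj].
  have := fsubsetP Hsub2 y Hy; rewrite in_fsetU in_intv => /orP [/(domset_range Hg2)|];
    move: Hy1 Hyj; lia.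
have Htau2 : forall y, y \in tau -> y != j + 2 -> y \in domset x2.
  move=> y; rewrite in_fsetD in_fset1 => /andP [Hy1 Hy] Hy2.
  move/fsubsetP: Hsub2 => /(_ y Hy); rewrite in_fsetU in_intv => /orP [//|].
  by move: Hy1 Hy2; lia.
have Hsz : size x1 = size x2 by rewrite Hs1 Hs2.
have Hmeet := meet_cover Hsz Hg1 Hg2 Htau1 Htau2.
have Hshift : forall Y, gapped (j + 2) n Y -> size Y = size x1 -> below T r.+1 n (j :: Y) ->
    [/\ size (map succn Y) = r, gapped (j.+1 + 2) n (map succn Y) &
        below S r.+1 n (j.+1 :: map succn Y)].
  by move=> Y HY; rewrite Hs1; exact: shift_witness.
have [x [Hx Hxr Htx HnT [h [Hh Hgh HhS] Hxh]]] :=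
  walk (P := fun Y => below T r.+1 n (j :: Y))
    (Q := fun h => [/\ size h = r, gapped (j.+1 + 2) n h & below S r.+1 n (j.+1 :: h)])
    Hg1 HT1 Htau1 Hshift (meet_gapped Hsz Hg1 (gapped_mono (leqnSn _) Hg2))
    (meet_le_l _ _) Hmeet (ex_intro2 _ _ x2 (And3 Hs2 Hg2 HS2) (meet_le_r Hsz)).
exists x; split; first by split => //; split; rewrite ?Hxr //; exists h.
apply/fsubsetP => y Hy; rewrite in_fsetU in_fset1.
case: (eqVneq y j.+1) => [->|Hne]; first by rewrite orbT.
by rewrite (fsubsetP Htx) // in_fsetD in_fset1 Hne.
Qed.

End Lemma310.

Unset Implicit Arguments.

Theorem lemma3p10 (k n : nat) (S T : setfam) (j : nat) :
  1 <= k -> 2 * k <= n ->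
  antichain k n S -> antichain k n T -> precp_fam T S ->
  1 <= j ->
  ~ voidc (Dc k n S T j.+1) ->
  ceq (cap (Dc k n S T j) (Dc k n S T j.+1))
      (join (cdiff (Bc (k - 1) n (SJ k n S 1 j.+1) (j + 2))
                   (Bc (k - 1) n (SJ k n T 1 j) (j + 2)))
            (simplex [fset j.+1])).
Proof.
case: k => [//|r] _ _ [HS _] [HT _] Hprec Hj _ s.
have Hj1 : 1 <= j.+1 by [].
rewrite /cap (rhs_char HS HT s Hj) (Dc_char HS HT s Hj) (Dc_char HS HT s Hj1).
split.
- move=> [[x1 [H1 Hs1]] [x2 [H2 Hs2]]]; exact: cap_Rfacet H1 H2 Hs1 Hs2.
- move=> [x [Hx Hs]]; split.
  + exists x; split; first exact: Rfacet_Dj.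
    apply: fsubset_trans Hs _; apply: fsetUS; apply/fsubsetP => y.
    by rewrite in_fset1 in_intv => /eqP ->; rewrite leqnSn leqnn.
  + exists (raise (j.+1 + 2) x); split; first exact: Rfacet_Dj1.
    exact: Rfacet_Dj1_cover Hx Hs.
Qed.
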